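(* Let $\mathcal{B}$ be a unital complex algebra, $n_0\in\mathbb{N}$, $\mathcal{A}=\mathrm{Mat}_{n_0}(\mathcal{B})$ and let $(\Omega,\mathrm{d},\bar{\mathrm{d}})$ be a bidifferential graded algebra with $\Omega=\mathcal{A}\otimes\bigwedge(\mathbb{C}^2)$, where $\mathrm{d},\bar{\mathrm{d}}$ respect matrix sizes. Fix $n,n',m,m'\ge n_0$. Let $\mathbf{X}\in\mathrm{Mat}(n,n,\mathcal{B})$ and $\mathbf{Y}\in\mathrm{Mat}(n',n,\mathcal{B})$ satisfy $$\bar{\mathrm{d}}\mathbf{X}=(\mathrm{d}\mathbf{X})\,\mathbf{P},\qquad \bar{\mathrm{d}}\mathbf{Y}=(\mathrm{d}\mathbf{Y})\,\mathbf{P},\qquad \mathbf{R}\mathbf{X}-\mathbf{X}\mathbf{P}=-\mathbf{Q}\mathbf{Y},$$ where $\mathbf{P},\mathbf{R}\in\mathrm{Mat}(n,n,\mathcal{B})$ are $\mathrm{d}$- and $\bar{\mathrm{d}}$-constant and $\mathbf{Q}=\tilde{\mathbf{V}}\,Q\,\tilde{\mathbf{U}}$ with $\mathrm{d}$- and $\bar{\mathrm{d}}$-constant matrices $\tilde{\mathbf{U}}\in\mathrm{Mat}(m',n',\mathcal{B})$, $\tilde{\mathbf{V}}\in\mathrm{Mat}(n,m,\mathcal{B})$, $Q\in\mathrm{Mat}(m,m',\mathcal{B})$. If $\mathbf{X}$ is invertible, then $\phi:=\tilde{\mathbf{U}}\mathbf{Y}\mathbf{X}^{-1}\tilde{\mathbf{V}}\in\mathrm{Mat}(m',m,\mathcal{B})$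 satisfies $$\bar{\mathrm{d}}\phi=(\mathrm{d}\phi)\,Q\,\phi+\mathrm{d}\theta\qquad\text{with}\qquad \theta=\tilde{\mathbf{U}}\mathbf{Y}\mathbf{X}^{-1}\mathbf{R}\tilde{\mathbf{V}},$$ and consequently $\bar{\mathrm{d}}\mathrm{d}\phi=\mathrm{d}\phi\,Q\,\mathrm{d}\phi$.
   Context: A complex graded algebra is an associative algebra $\Omega=\bigoplus_{r\ge0}\Omega^r$ (direct sum of complex vector spaces) with $\Omega^r\Omega^s\subseteq\Omega^{r+s}$; $\Omega^0$ is a subalgebra and each $\Omega^r$ an $\Omega^0$-bimodule. A bidifferential graded algebra is a graded algebra with two linear maps $\mathrm{d},\bar{\mathrm{d}}:\Omega\to\Omega$ of degree one satisfying $\mathrm{d}^2=0$, $\bar{\mathrm{d}}^2=0$, $\mathrm{d}\bar{\mathrm{d}}+\bar{\mathrm{d}}\mathrm{d}=0$ and the graded Leibniz rule $\mathrm{d}(\chi\chi')=(\mathrm{d}\chi)\chi'+(-1)^r\chi\,\mathrm{d}\chi'$ (same for $\bar{\mathrm{d}}$) for $\chi\in\Omega^r$. $\mathrm{Mat}_{n_0}(\mathcal{B}):=\bigoplus_{n',n\ge n_0}\mathrm{Mat}(n',n,\mathcal{B})$ with the usual matrix product, extended by $AB=0$ whenever sizes do not match. $\Omega=\mathcal{A}\otimes\bigwedge(\mathbb{C}^2)$, elements of $\bigwedge(\mathbb{C}^2)$ are treated as constants; ''$\mathrm{d},\bar{\mathrm{d}}$ respect matrix sizes'' means they map $\mathrm{Mat}(n',n,\mathcal{B})\otimes\bigwedge(\mathbb{C}^2)$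 into itself. An element is $\mathrm{d}$- and $\bar{\mathrm{d}}$-constant if it is annihilated by both $\mathrm{d}$ and $\bar{\mathrm{d}}$. *)

From HB Require Import structures.
From mathcomp Require Import all_boot all_order all_algebra.
Set Implicit Arguments. Unset Strict Implicit. Unset Printing Implicit Defensive.
Import Order.TTheory GRing.Theory Num.Theory.
Local Open Scope ring_scope.

(* The block Mat(p,q,B) (x) /\(C^2) of Omega = Mat_{n0}(B) (x) /\(C^2):
   a form is given by its coefficients with respect to the basis
   e_S (S a subset of {0,1}) of the exterior algebra /\(C^2),
   e_{} = 1, e_{0} = xi_1, e_{1} = xi_2, e_{0,1} = xi_1 /\ xi_2. *)
Notation form B p q := {ffun {set 'I_2} -> 'M[B]_(p, q)}.

(* sign of e_T /\ e_U = (-1)^(wsign T U) e_(T :|: U) for disjoint T U *)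
Definition wsign (T U : {set 'I_2}) : nat :=
  #|[set ij : 'I_2 * 'I_2 | (ij.1 \in T) && (ij.2 \in U) && (ij.2 < ij.1)%N]|.

(* product in Omega of a block (p,q) element with a block (q,s) element
   (products of blocks of non-matching sizes are zero) *)
Definition wmul (B : nzRingType) p q s (a : form B p q) (b : form B q s)
  : form B p s :=
  [ffun S : {set 'I_2} => \sum_(T : {set 'I_2} | T \subset S)
                ((-1) ^+ wsign T (S :\: T)) *: (a T *m b (S :\: T))].

Definition form0 (B : nzRingType) p q (M : 'M[B]_(p, q)) : form B p q :=
  [ffun S : {set 'I_2} => if S == set0 then M else 0].

Definition wconst (B : nzRingType) p (S : {set 'I_2}) : form B p p :=
  [ffun T : {set 'I_2} => if T == S then 1%:M else 0].

Definition homog (B : nzRingType) p q (r : nat) (f : form B p q) : Prop :=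
  forall S : {set 'I_2}, #|S| <> r -> f S = 0.

(* a family of maps on the blocks, i.e. a map on Omega respecting matrix sizes *)
Definition blockmap (B : nzRingType) := forall p q : nat, form B p q -> form B p q.

Definition is_graded_derivation (K : fieldType) (B : algType K) (n0 : nat)
    (d : blockmap B) : Prop :=
  [/\ (forall p q, (n0 <= p)%N -> (n0 <= q)%N ->
         forall (k : K) (f g : form B p q),
           d p q (k%:A *: f + g) = k%:A *: d p q f + d p q g),
      (forall p q, (n0 <= p)%N -> (n0 <= q)%N ->
         forall r (f : form B p q), homog r f -> homog r.+1 (d p q f)),
      (forall p q s, (n0 <= p)%N -> (n0 <= q)%N -> (n0 <= s)%N ->
         forall r (f : form B p q) (g : form B q s), homog r f ->
           d p s (wmul f g)
           = wmul (d p q f) g + ((-1) ^+ r) *: wmul f (d q s g))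
    &
      (forall p S, (n0 <= p)%N -> d p p (wconst B p S) = 0)].

Definition is_bidga (K : fieldType) (B : algType K) (n0 : nat)
    (d dbar : blockmap B) : Prop :=
  [/\ is_graded_derivation n0 d, is_graded_derivation n0 dbar,
      (forall p q, (n0 <= p)%N -> (n0 <= q)%N -> forall f : form B p q,
         d p q (d p q f) = 0),
      (forall p q, (n0 <= p)%N -> (n0 <= q)%N -> forall f : form B p q,
         dbar p q (dbar p q f) = 0)
    & (forall p q, (n0 <= p)%N -> (n0 <= q)%N -> forall f : form B p q,
         d p q (dbar p q f) + dbar p q (d p q f) = 0)].

Definition dconst (B : nzRingType) (d dbar : blockmap B) p q (M : 'M[B]_(p, q))
  : Prop := d p q (form0 M) = 0 /\ dbar p q (form0 M) = 0.

(* Write W := Y X^-1, so that phi = Ut W Vt and theta = Ut W R Vt.  Since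
   d(X^-1) = - X^-1 (dX) X^-1, the hypotheses dbar X = (dX) P and
   dbar Y = (dY) P give dbar W = (dW) X P X^-1, and the Sylvester equation
   R X - X P = - (Vt Q Ut) Y turns X P X^-1 into R + Vt Q Ut W.  Multiplying
   by the constant matrices Ut and Vt yields dbar phi = (d phi) Q phi + d theta.
   Applying d to this identity, using d^2 = 0, the graded Leibniz rule and
   d dbar = - dbar d, gives the second equation. *)
From Pilot Require Import Defs.
From HB Require Import structures.
From mathcomp Require Import all_boot all_order all_algebra.
Import Order.TTheory GRing.Theory Num.Theory.
Local Open Scope ring_scope.
(* [all_algebra] shadows the [form] notation of [Defs]. *)
Import Defs.

Section FormProducts.
Context {B : nzRingType}.

Lemma wsign_set0r (T : {set 'I_2}) : wsign T set0 = 0%N.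
Proof. by apply/eqP; rewrite cards_eq0; apply/eqP/setP => ij; rewrite !inE andbF. Qed.

Lemma wsign_set0l (T : {set 'I_2}) : wsign set0 T = 0%N.
Proof. by apply/eqP; rewrite cards_eq0; apply/eqP/setP => ij; rewrite !inE. Qed.

Lemma wmul_form0r p q s (f : form B p q) (M : 'M[B]_(q, s)) S :
  wmul f (form0 M) S = f S *m M.
Proof.
rewrite ffunE (bigD1 S) //= setDv ffunE eqxx wsign_set0r scale1r big1 ?addr0 //.
move=> T /andP[sTS neTS]; rewrite ffunE ifN ?mulmx0 ?scaler0 //.
by rewrite setD_eq0; apply: contra neTS => sST; rewrite eqEsubset sTS.
Qed.

Lemma wmul_form0l p q s (M : 'M[B]_(p, q)) (g : form B q s) S :
  wmul (form0 M) g S = M *m g S.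
Proof.
rewrite ffunE (bigD1 set0) ?sub0set //= setD0 ffunE eqxx wsign_set0l scale1r.
by rewrite big1 ?addr0 // => T /andP[_ /negbTE nT0]; rewrite ffunE nT0 mul0mx scaler0.
Qed.

Lemma wmul0l p q s (g : form B q s) : wmul (0 : form B p q) g = 0.
Proof. by apply/ffunP => S; rewrite !ffunE big1 // => T _; rewrite ffunE mul0mx scaler0. Qed.

Lemma wmul0r p q s (f : form B p q) : wmul f (0 : form B q s) = 0.
Proof. by apply/ffunP => S; rewrite !ffunE big1 // => T _; rewrite ffunE mulmx0 scaler0. Qed.

Lemma form0M p q s (M : 'M[B]_(p, q)) (N : 'M[B]_(q, s)) :
  form0 (M *m N) = wmul (form0 M) (form0 N).
Proof. by apply/ffunP => S; rewrite wmul_form0l !ffunE; case: ifP; rewrite ?mulmx0. Qed.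

Lemma homog_form0 p q (M : 'M[B]_(p, q)) : homog 0 (form0 M).
Proof. by move=> S; rewrite ffunE; case: eqP => // ->; rewrite cards0. Qed.

End FormProducts.

Arguments homog_form0 {B p q}.

Section GradedDerivation.
Context {K : fieldType} {B : algType K} {n0 : nat} {d : blockmap B}.
Hypothesis Hd : is_graded_derivation n0 d.

Lemma derivationD p q (f g : form B p q) : (n0 <= p)%N -> (n0 <= q)%N ->
  d p q (f + g) = d p q f + d p q g.
Proof. by case: Hd => lin_d _ _ _ hp hq; have := lin_d _ _ hp hq 1 f g; rewrite !scale1r. Qed.

Lemma derivation_homog {p q} (M : 'M[B]_(p, q)) : (n0 <= p)%N -> (n0 <= q)%N ->
  homog 1 (d p q (form0 M)).
Proof. by case: Hd => _ deg_d _ _ hp hq; exact: deg_d _ _ hp hq 0 _ (homog_form0 M). Qed.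

Lemma derivation_form0M p q s (M : 'M[B]_(p, q)) (N : 'M[B]_(q, s)) :
  (n0 <= p)%N -> (n0 <= q)%N -> (n0 <= s)%N ->
  d p s (form0 (M *m N))
  = wmul (d p q (form0 M)) (form0 N) + wmul (form0 M) (d q s (form0 N)).
Proof.
case: Hd => _ _ leibniz_d _ hp hq hs.
by rewrite form0M (leibniz_d _ _ _ hp hq hs 0 _ _ (homog_form0 M)) scale1r.
Qed.

Lemma derivation_form0_mulmx {p q s} (M : 'M[B]_(p, q)) (N : 'M[B]_(q, s)) S :
  (n0 <= p)%N -> (n0 <= q)%N -> (n0 <= s)%N ->
  d p s (form0 (M *m N)) S = d p q (form0 M) S *m N + M *m d q s (form0 N) S.
Proof.
by move=> hp hq hs; rewrite derivation_form0M // ffunE wmul_form0r wmul_form0l.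
Qed.

Lemma derivation_form0_1 p : (n0 <= p)%N -> d p p (form0 (1%:M : 'M[B]_p)) = 0.
Proof. by case: Hd => _ _ _ d_wconst hp; apply: (d_wconst _ set0 hp). Qed.

Lemma derivation_form0_mulC p q r s
    (U : 'M[B]_(p, q)) (M : 'M[B]_(q, r)) (V : 'M[B]_(r, s)) S :
  (n0 <= p)%N -> (n0 <= q)%N -> (n0 <= r)%N -> (n0 <= s)%N ->
  d p q (form0 U) = 0 -> d r s (form0 V) = 0 ->
  d p s (form0 (U *m M *m V)) S = U *m d q r (form0 M) S *m V.
Proof.
move=> hp hq hr hs dU dV.
by rewrite !derivation_form0_mulmx // dU dV !ffunE mul0mx mulmx0 add0r addr0.
Qed.

Section Inverse.
Context {n : nat} {X Z : 'M[B]_n}.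
Hypotheses (hn : (n0 <= n)%N) (ZX : Z *m X = 1%:M) (XZ : X *m Z = 1%:M).

Lemma derivation_form0_invmx S :
  d n n (form0 Z) S = - (Z *m d n n (form0 X) S *m Z).
Proof.
have := derivation_form0_mulmx Z X S hn hn hn.
rewrite ZX derivation_form0_1 // ffunE => /esym/eqP; rewrite addr_eq0 => /eqP dZX.
by rewrite -[LHS]mulmx1 -XZ mulmxA dZX mulNmx.
Qed.

Lemma derivation_form0_mul_invmx n' (Y : 'M[B]_(n', n)) S : (n0 <= n')%N ->
  d n' n (form0 (Y *m Z)) S *m X = d n' n (form0 Y) S - Y *m Z *m d n n (form0 X) S.
Proof.
move=> hn'; rewrite derivation_form0_mulmx // derivation_form0_invmx mulmxDl.
by rewrite mulmxN !mulNmx -!mulmxA ZX !mulmx1 !mulmxA.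
Qed.

End Inverse.
End GradedDerivation.

Lemma sylvester_conj {B : nzRingType} {n n'} {X Z P R : 'M[B]_n}
    {T : 'M[B]_(n, n')} {Y : 'M[B]_(n', n)} :
  X *m Z = 1%:M -> R *m X - X *m P = - (T *m Y) ->
  X *m P *m Z = R + T *m Y *m Z.
Proof.
move=> XZ /eqP; rewrite subr_eq addrC -subr_eq opprK => /eqP XP.
by rewrite -XP mulmxDl -!mulmxA XZ mulmx1.
Qed.

Section Bidifferential.
Context {K : fieldType} {B : algType K} {n0 : nat} {d dbar : blockmap B}.

Lemma dbar_form0_mul_invmx {n n'} {X Z P : 'M[B]_n} {Y : 'M[B]_(n', n)} :
  is_graded_derivation n0 d -> is_graded_derivation n0 dbar ->
  (n0 <= n)%N -> (n0 <= n')%N -> Z *m X = 1%:M -> X *m Z = 1%:M ->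
  dbar n n (form0 X) = wmul (d n n (form0 X)) (form0 P) ->
  dbar n' n (form0 Y) = wmul (d n' n (form0 Y)) (form0 P) ->
  dbar n' n (form0 (Y *m Z))
  = wmul (d n' n (form0 (Y *m Z))) (form0 (X *m P *m Z)).
Proof.
move=> Hd Hdb hn hn' ZX XZ dbarX dbarY; apply/ffunP => S.
rewrite wmul_form0r !mulmxA (derivation_form0_mul_invmx Hd) //.
rewrite (derivation_form0_mulmx Hdb) // (derivation_form0_invmx Hdb hn ZX XZ) dbarX dbarY.
by rewrite !wmul_form0r mulmxN !mulmxBl !mulmxA.
Qed.

Lemma dbar_d_form0 {m m'} {phi theta : 'M[B]_(m', m)} {Q : 'M[B]_(m, m')} :
  is_bidga n0 d dbar -> (n0 <= m)%N -> (n0 <= m')%N ->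
  d m m' (form0 Q) = 0 ->
  dbar m' m (form0 phi)
    = wmul (wmul (d m' m (form0 phi)) (form0 Q)) (form0 phi)
      + d m' m (form0 theta) ->
  dbar m' m (d m' m (form0 phi))
    = wmul (wmul (d m' m (form0 phi)) (form0 Q)) (d m' m (form0 phi)).
Proof.
case=> Hd _ dd _ d_dbar hm hm' dQ dbar_phi.
have dphi1 := derivation_homog Hd phi hm' hm.
set F := wmul (d m' m (form0 phi)) (form0 Q).
have F1 : homog 1 F by move=> S /dphi1 dphiS; rewrite wmul_form0r dphiS mul0mx.
have [_ _ leibniz_d _] := Hd.
have dF : d m' m' F = 0.
  by rewrite (leibniz_d _ _ _ hm' hm hm' 1 _ _ dphi1) dd // dQ wmul0l wmul0r scaler0 addr0.
have d_dbar_phi : d m' m (dbar m' m (form0 phi)) = - wmul F (d m' m (form0 phi)).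
  rewrite dbar_phi (derivationD Hd) // dd // addr0.
  by rewrite (leibniz_d _ _ _ hm' hm' hm 1 _ _ F1) dF wmul0l add0r scaleN1r.
by apply: oppr_inj; rewrite -d_dbar_phi; apply/eqP; rewrite eq_sym -addr_eq0 d_dbar.
Qed.

End Bidifferential.

Theorem theorem2p3 (K : numClosedFieldType) (B : algType K) (n0 : nat)
  (d dbar : blockmap B) (Hbidga : is_bidga n0 d dbar)
  (n n' m m' : nat) (Hn : (n0 <= n)%N) (Hn' : (n0 <= n')%N)
  (Hm : (n0 <= m)%N) (Hm' : (n0 <= m')%N)
  (X P R : 'M[B]_(n, n)) (Y : 'M[B]_(n', n))
  (Ut : 'M[B]_(m', n')) (Vt : 'M[B]_(n, m)) (Q : 'M[B]_(m, m'))
  (HP : dconst d dbar P) (HR : dconst d dbar R)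
  (HUt : dconst d dbar Ut) (HVt : dconst d dbar Vt) (HQ : dconst d dbar Q)
  (HX : dbar n n (form0 X) = wmul (d n n (form0 X)) (form0 P))
  (HY : dbar n' n (form0 Y) = wmul (d n' n (form0 Y)) (form0 P))
  (HRXP : R *m X - X *m P = - ((Vt *m Q *m Ut) *m Y))
  (Xinv : 'M[B]_(n, n)) (HXl : Xinv *m X = 1%:M) (HXr : X *m Xinv = 1%:M) :
  let phi := Ut *m Y *m Xinv *m Vt in
  let theta := Ut *m Y *m Xinv *m R *m Vt in
  dbar m' m (form0 phi)
    = wmul (wmul (d m' m (form0 phi)) (form0 Q)) (form0 phi)
      + d m' m (form0 theta)
  /\ dbar m' m (d m' m (form0 phi))
    = wmul (wmul (d m' m (form0 phi)) (form0 Q)) (d m' m (form0 phi)).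
Proof.
move=> phi theta; have [Hd Hdb _ _ _] := Hbidga.
have [[dUt dbarUt] [dVt dbarVt]] := (HUt, HVt).
have dbarW := dbar_form0_mul_invmx Hd Hdb Hn Hn' HXl HXr HX HY.
rewrite (sylvester_conj HXr HRXP) in dbarW.
suff dbar_phi : dbar m' m (form0 phi)
    = wmul (wmul (d m' m (form0 phi)) (form0 Q)) (form0 phi) + d m' m (form0 theta).
  by split=> //; exact: dbar_d_form0 Hbidga Hm Hm' HQ.1 dbar_phi.
apply/ffunP => S; rewrite /phi /theta -!(mulmxA Ut Y) -(mulmxA _ R).
rewrite (derivation_form0_mulC Hdb) // dbarW wmul_form0r [RHS]ffunE !wmul_form0r.
rewrite !(derivation_form0_mulC Hd) //; last first.
  by rewrite (derivation_form0M Hd) // HR.1 dVt wmul0l wmul0r addr0.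
by rewrite mulmxDr mulmxDr mulmxDl addrC !mulmxA.
Qed.
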